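(* In the dynamic oligopoly model of the context, suppose that $c$ is continuous, increasing and convex on $A$ and that $u(x,m)$ is discretely convex and strictly increasing in $x$ and continuous in $m$. Then for every $x\in X$ and $m$, the function $a\mapsto H(x,a;m,V)=u(x,m)-c(a)+\beta\sum_{y}W(x,a,y)V(y,m)$ is strictly concave on $A$; hence the optimal policy correspondence $G(x,m)=\arg\max_{a\in A}H(x,a;m,V)$ is single-valued and there is a unique optimal policy $g$.
   Context: Dynamic oligopoly model. States $X=\{0,1,2,\dots\}$; actions $A=[\underline a,1]$, $0<\underline a<1$. For $x\ge1$: $W(x,a,x+1)=\frac{(1-\delta)a}{1+a}$, $W(x,a,x)=\frac{1-\delta+\delta a}{1+a}$, $W(x,a,x-1)=\frac{\delta}{1+a}$, otherwise $0$; $W(0,a,1)=\frac{(1-\delta)a}{1+a}$, $W(0,a,0)=1-W(0,a,1)$; $\delta\in(0,1)$. Payoff $u(x,m)-c(a)$, discount $\beta\in(0,1)$. For fixed $m$, the value function $V(x,m)$ is assumed finite, satisfies $V(x,m)=\max_{a\in A}\{u(x,m)-c(a)+\beta\sum_y W(x,a,y)V(y,m)\}$, and is the pointwise limit of $T^nf$ for any $f$ (in particular $f\equiv0$), where $Tf(x,m)=\max_{a\in A}\{u(x,m)-c(a)+\beta\sum_yW(x,a,y)f(y,m)\}$. A function $h:X\to\mathbb{R}$ is discretely convex if $h(x+2)-2h(x+1)+h(x)\ge0$ for all $x\ge0$. *)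

From HB Require Import structures.
From mathcomp Require Import all_boot all_order all_algebra.
From mathcomp Require Import all_classical all_reals all_analysis.
Set Implicit Arguments. Unset Strict Implicit. Unset Printing Implicit Defensive.
Import Order.TTheory GRing.Theory Num.Theory.
Import numFieldNormedType.Exports.
Local Open Scope ring_scope.
Local Open Scope classical_set_scope.

Section Model.
Variables (R : realType) (M : topologicalType).
Variables (alo delta beta : R).

Definition inA (a : R) : bool := (alo <= a) && (a <= 1).
Definition Aset : set R := [set a | inA a].

Definition W (x : nat) (a : R) (y : nat) : R :=
  if x == 0%N then
    (if y == 1%N then (1 - delta) * a / (1 + a)
     else if y == 0%N then 1 - (1 - delta) * a / (1 + a) else 0)
  else if y == x.+1 then (1 - delta) * a / (1 + a)
  else if y == x then (1 - delta + delta * a) / (1 + a)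
  else if y.+1 == x then delta / (1 + a)
  else 0.

(* sum_y W(x,a,y) f(y): W(x,a,y) = 0 for y >= x+2, so the sum is finite *)
Definition EW (x : nat) (a : R) (f : nat -> R) : R :=
  \sum_(y < x.+2) W x a y * f y.

Definition H (u : nat -> M -> R) (c : R -> R) (f : nat -> M -> R)
  (x : nat) (m : M) (a : R) : R :=
  u x m - c a + beta * EW x a (fun y => f y m).

Definition Top (u : nat -> M -> R) (c : R -> R) (f : nat -> M -> R)
  : nat -> M -> R :=
  fun x m => sup [set H u c f x m a | a in Aset].

Definition discretely_convex (h : nat -> R) : Prop :=
  forall x : nat, 0 <= h x.+2 - 2 * h x.+1 + h x.

Definition strictly_concave_on (S : set R) (g : R -> R) : Prop :=
  forall a b t, S a -> S b -> a != b -> 0 < t -> t < 1 ->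
    t * g a + (1 - t) * g b < g (t * a + (1 - t) * b).

Definition convex_on (S : set R) (g : R -> R) : Prop :=
  forall a b t, S a -> S b -> 0 <= t -> t <= 1 ->
    g (t * a + (1 - t) * b) <= t * g a + (1 - t) * g b.

Definition is_argmax (S : set R) (g : R -> R) (a : R) : Prop :=
  S a /\ forall b, S b -> g b <= g a.

End Model.

From HB Require Import structures.
From mathcomp Require Import all_boot all_order all_algebra.
From mathcomp Require Import all_classical all_reals all_analysis.
From mathcomp Require Import ring lra zify.
Import Order.TTheory GRing.Theory Num.Theory.
Import numFieldNormedType.Exports.
Local Open Scope ring_scope.
Local Open Scope classical_set_scope.

(* In every state the continuation value is a hyperbola in the action,
   [EW x a V = q - d / (1 + a)], where [d] is a nonnegative combination of the
   increments [V y.+1 - V y] with a positive weight on [V x.+1 - V x].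
   Value iteration preserves monotonicity of [V] in the state, so [V] is
   nondecreasing, and the Bellman equation together with the strict
   monotonicity of [u] makes it increasing; hence [d > 0] and
   [a |-> - d / (1 + a)] is strictly concave.  Adding the concave [- c a] keeps
   [H] strictly concave on the interval [A], so its maximiser is unique. *)

Lemma unique_choice2 {X Y Z : Type} {P : X -> Y -> Z -> Prop} :
  (forall x y, exists! z, P x y z) -> exists! g : X -> Y -> Z, forall x y, P x y (g x y).
Proof.
move=> P_uniq.
have P_ex x y : exists z, P x y z by have [z [Pz _]] := P_uniq x y; exists z.
have Px_ex x : exists gx : Y -> Z, forall y, P x y (gx y).
  by have [gx Pgx] := choice (P_ex x); exists gx.
have [g Pg] := choice Px_ex.
exists g; split=> // g' Pg'; apply/funext => x; apply/funext => y.
have [z [_ z_uniq]] := P_uniq x y.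
by rewrite -(z_uniq _ (Pg x y)) -(z_uniq _ (Pg' x y)).
Qed.

Section StrictConcavity.
Context {R : realType}.
Implicit Types (S : set R) (g h : R -> R).

Lemma inv1D_strictly_convex {a b t : R} : 0 < a -> 0 < b -> a != b -> 0 < t -> t < 1 ->
  (1 + (t * a + (1 - t) * b))^-1 < t / (1 + a) + (1 - t) / (1 + b).
Proof.
move=> a_gt0 b_gt0 ab t_gt0 t_lt1.
have m_gt0 : 0 < 1 + (t * a + (1 - t) * b) by nra.
have a1_neq0 : 1 + a != 0 by rewrite gt_eqF // ltr_pwDr.
have b1_neq0 : 1 + b != 0 by rewrite gt_eqF // ltr_pwDr.
rewrite -subr_gt0.
have -> : t / (1 + a) + (1 - t) / (1 + b) - (1 + (t * a + (1 - t) * b))^-1 =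
    t * (1 - t) * (a - b) ^+ 2 / ((1 + a) * (1 + b) * (1 + (t * a + (1 - t) * b))).
  by field; rewrite gt_eqF ?a1_neq0 ?b1_neq0.
apply: divr_gt0; last by rewrite !mulr_gt0 // ltr_pwDr.
have ab2_gt0 : 0 < (a - b) ^+ 2 by rewrite lt0r sqr_ge0 andbT sqrf_eq0 subr_eq0.
by apply: mulr_gt0 => //; apply: mulr_gt0 => //; rewrite subr_gt0.
Qed.

Lemma strictly_concave_on_hyperbola S (q d : R) :
  (forall a, S a -> 0 < a) -> 0 < d -> strictly_concave_on S (fun a => q - d / (1 + a)).
Proof.
move=> S_gt0 d_gt0 a b t Sa Sb ab t_gt0 t_lt1.
have := inv1D_strictly_convex (S_gt0 a Sa) (S_gt0 b Sb) ab t_gt0 t_lt1.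
rewrite -(ltr_pM2l d_gt0) -subr_gt0 => lt_inv; rewrite -subr_gt0.
by congr (0 < _): lt_inv; ring.
Qed.

Lemma strictly_concave_on_affine S g (l k : R) : 0 < k ->
  strictly_concave_on S g -> strictly_concave_on S (fun a => l + k * g a).
Proof.
move=> k_gt0 g_sc a b t Sa Sb ab t_gt0 t_lt1.
have := g_sc a b t Sa Sb ab t_gt0 t_lt1.
rewrite -(ltr_pM2l k_gt0) -subr_gt0 => lt_g; rewrite -subr_gt0.
by congr (0 < _): lt_g; ring.
Qed.

Lemma strictly_concave_on_sub S g h :
  strictly_concave_on S g -> convex_on S h -> strictly_concave_on S (fun a => g a - h a).
Proof.
move=> g_sc h_cvx a b t Sa Sb ab t_gt0 t_lt1.
have lt_g := g_sc a b t Sa Sb ab t_gt0 t_lt1.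
have le_h := h_cvx a b t Sa Sb (ltW t_gt0) (ltW t_lt1).
rewrite -subr_gt0.
have -> : g (t * a + (1 - t) * b) - h (t * a + (1 - t) * b)
    - (t * (g a - h a) + (1 - t) * (g b - h b))
  = (g (t * a + (1 - t) * b) - (t * g a + (1 - t) * g b))
    + (t * h a + (1 - t) * h b - h (t * a + (1 - t) * b)) by ring.
by rewrite ltr_wpDr // ?subr_ge0 // subr_gt0.
Qed.

Lemma strictly_concave_on_argmax_unique S g a b :
  (forall a b t, S a -> S b -> 0 < t -> t < 1 -> S (t * a + (1 - t) * b)) ->
  strictly_concave_on S g -> is_argmax S g a -> is_argmax S g b -> a = b.
Proof.
move=> S_convex g_sc [Sa a_max] [Sb b_max]; apply/eqP/negPn/negP => ab.
have half_gt0 : 0 < 2^-1 :> R by rewrite invr_gt0.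
have half_lt1 : 2^-1 < 1 :> R by rewrite invf_lt1 // ltr1n.
have := g_sc a b _ Sa Sb ab half_gt0 half_lt1.
have := a_max _ (S_convex a b _ Sa Sb half_gt0 half_lt1).
have := b_max _ Sa.
move: (g a) (g b) (g _) => ga gb gm; lra.
Qed.

End StrictConcavity.

Definition EW_gap {R : realType} (delta : R) (x : nat) (f : nat -> R) : R :=
  if x is k.+1 then delta * (f k.+1 - f k) + (1 - delta) * (f k.+2 - f k.+1)
  else (1 - delta) * (f 1%N - f 0%N).

Section Kernel.
Context {R : realType} {delta : R}.

Lemma EW_hyperbolic x a f : 0 < a ->
  EW delta x a f = f x.+1 - delta * (f x.+1 - f x) - EW_gap delta x f / (1 + a).
Proof.
move=> a_gt0; have a1_neq0 : 1 + a != 0 by rewrite gt_eqF // ltr_pwDr.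
case: x => [|k].
  by rewrite /EW !big_ord_recr big_ord0 /= /W /=; field.
rewrite /EW !big_ord_recr /= big1 => [|[i /= i_lt] _]; last first.
  rewrite /W /=; have -> : (i == k.+2) = false by apply/eqP; lia.
  have -> : (i == k.+1) = false by apply/eqP; lia.
  have -> : (i.+1 == k.+1) = false by apply/eqP; lia.
  by rewrite mul0r.
rewrite /W /= !eqxx.
have -> : (k == k.+2) = false by apply/eqP; lia.
have -> : (k == k.+1) = false by apply/eqP; lia.
have -> : (k.+1 == k.+2) = false by apply/eqP; lia.
by field.
Qed.

Hypotheses (delta_gt0 : 0 < delta) (delta_lt1 : delta < 1).

Lemma EW_gap_ge0 x f : (forall y, f y <= f y.+1) -> 0 <= EW_gap delta x f.
Proof.
move=> f_nd; have nd y : 0 <= f y.+1 - f y by rewrite subr_ge0.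
have delta1_ge0 : 0 <= 1 - delta by rewrite subr_ge0 ltW.
case: x => [|k] /=; first by rewrite mulr_ge0 ?nd.
by rewrite addr_ge0 // mulr_ge0 ?nd // ltW.
Qed.

Lemma EW_gap_gt0 x f : (forall y, f y < f y.+1) -> 0 < EW_gap delta x f.
Proof.
move=> f_inc; have inc y : 0 < f y.+1 - f y by rewrite subr_gt0.
case: x => [|k] /=; first by rewrite mulr_gt0 ?inc // subr_gt0.
by rewrite addr_gt0 // mulr_gt0 ?inc // subr_gt0.
Qed.

Lemma EW_le_succ x a f : 0 < a -> (forall y, f y <= f y.+1) ->
  EW delta x a f <= f x.+1.
Proof.
move=> a_gt0 f_nd; rewrite EW_hyperbolic // -subr_ge0.
have -> : f x.+1 - (f x.+1 - delta * (f x.+1 - f x) - EW_gap delta x f / (1 + a))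
  = delta * (f x.+1 - f x) + EW_gap delta x f / (1 + a) by ring.
apply: addr_ge0; first by apply: mulr_ge0; [exact: ltW | rewrite subr_ge0].
by apply: divr_ge0; [exact: EW_gap_ge0 | lra].
Qed.

Lemma EW_le_EW_succ x a f : 0 < a -> (forall y, f y <= f y.+1) ->
  EW delta x a f <= EW delta x.+1 a f.
Proof.
move=> a_gt0 f_nd; have a1_neq0 : 1 + a != 0 by rewrite gt_eqF // ltr_pwDr.
rewrite !EW_hyperbolic // -subr_ge0.
(* the asymptotes of the two hyperbolas differ by exactly [EW_gap delta x.+1 f] *)
have -> : f x.+2 - delta * (f x.+2 - f x.+1) - EW_gap delta x.+1 f / (1 + a)
    - (f x.+1 - delta * (f x.+1 - f x) - EW_gap delta x f / (1 + a))
  = (a * EW_gap delta x.+1 f + EW_gap delta x f) / (1 + a) by rewrite /=; field.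
apply: divr_ge0; last lra.
by apply: addr_ge0; [apply: mulr_ge0; [lra|] |]; exact: EW_gap_ge0.
Qed.

Lemma EW_strictly_concave S x f : (forall a, S a -> 0 < a) -> (forall y, f y < f y.+1) ->
  strictly_concave_on S (fun a => EW delta x a f).
Proof.
move=> S_gt0 f_inc a b t Sa Sb ab t_gt0 t_lt1.
have [a_gt0 b_gt0] := (S_gt0 a Sa, S_gt0 b Sb).
have m_gt0 : 0 < t * a + (1 - t) * b by nra.
rewrite !EW_hyperbolic //.
exact: (strictly_concave_on_hyperbola _ _ _ S_gt0 (EW_gap_gt0 x _ f_inc)
  a b t Sa Sb ab t_gt0 t_lt1).
Qed.

End Kernel.

Section Bellman.
Context {R : realType} {M : topologicalType} {alo delta beta : R}.
Context {u : nat -> M -> R} {c : R -> R}.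
Hypotheses (alo_gt0 : 0 < alo) (alo_lt1 : alo < 1).
Hypotheses (delta_gt0 : 0 < delta) (delta_lt1 : delta < 1) (beta_gt0 : 0 < beta).
Hypothesis c_nondecreasing : forall a b, Aset alo a -> Aset alo b -> a <= b -> c a <= c b.
Hypothesis u_increasing : forall m x, u x m < u x.+1 m.

Local Notation A := (Aset alo).
Local Notation Hu := (H delta beta u c).
Local Notation Tu := (Top alo delta beta u c).

Lemma Aset_gt0 a : A a -> 0 < a.
Proof. by rewrite /Aset /inA /= => /andP[alo_le _]; exact: lt_le_trans alo_le. Qed.

Lemma Aset_alo : A alo.
Proof. by rewrite /Aset /inA /= lexx ltW. Qed.

Lemma Aset_convex a b t : A a -> A b -> 0 < t -> t < 1 -> A (t * a + (1 - t) * b).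
Proof.
rewrite /Aset /inA /= => /andP[a_lb a_ub] /andP[b_lb b_ub] t_gt0 t_lt1.
have := ler_wpM2l (ltW t_gt0) a_lb; have := ler_wpM2l (ltW t_gt0) a_ub.
have t1_ge0 : 0 <= 1 - t by rewrite subr_ge0 ltW.
have := ler_wpM2l t1_ge0 b_lb; have := ler_wpM2l t1_ge0 b_ub.
by move=> *; apply/andP; split; lra.
Qed.

Lemma H_lt_H_succ f x m a : (forall y, f y m <= f y.+1 m) -> A a ->
  Hu f x m a < Hu f x.+1 m a.
Proof.
move=> f_nd Aa; rewrite /H.
have := ler_wpM2l (ltW beta_gt0) (EW_le_EW_succ delta_gt0 delta_lt1 x _ _ (Aset_gt0 _ Aa) f_nd).
by have := u_increasing m x; lra.
Qed.

Lemma H_le_bound f x m a : (forall y, f y m <= f y.+1 m) -> A a ->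
  Hu f x m a <= u x m - c alo + beta * f x.+1 m.
Proof.
move=> f_nd Aa; rewrite /H.
have := c_nondecreasing alo a Aset_alo Aa (andP Aa).1.
have := ler_wpM2l (ltW beta_gt0) (EW_le_succ delta_gt0 delta_lt1 x _ _ (Aset_gt0 _ Aa) f_nd).
by lra.
Qed.

Lemma Top_nondecreasing f : (forall x m, f x m <= f x.+1 m) ->
  forall x m, Tu f x m <= Tu f x.+1 m.
Proof.
move=> f_nd x m; apply: ge_sup; first by exists (Hu f x m alo), alo => //; exact: Aset_alo.
move=> _ [a Aa <-].
have H_bounded : has_ubound [set Hu f x.+1 m b | b in A].
  by exists (u x.+1 m - c alo + beta * f x.+2 m) => _ [b Ab <-]; exact: H_le_bound.
apply: le_trans (ub_le_sup H_bounded _); last by exists a.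
exact/ltW/H_lt_H_succ.
Qed.

Lemma iter_Top_nondecreasing n x m :
  iter n Tu (fun _ _ => 0) x m <= iter n Tu (fun _ _ => 0) x.+1 m.
Proof.
by elim: n x m => [//|n IHn] x m; apply: Top_nondecreasing.
Qed.

Lemma H_strictly_concave f x m : convex_on A c -> (forall y, f y m < f y.+1 m) ->
  strictly_concave_on A (Hu f x m).
Proof.
move=> c_convex f_inc.
have -> : Hu f x m = fun a => u x m + beta * EW delta x a (f^~ m) - c a.
  by apply/funext => a; rewrite /H addrAC.
apply: strictly_concave_on_sub c_convex.
apply: strictly_concave_on_affine beta_gt0 _.
exact: EW_strictly_concave Aset_gt0 f_inc.
Qed.

Section ValueFunction.
Context {V : nat -> M -> R}.
Hypothesis V_Bellman : forall x m,
  (exists2 a, A a & V x m = Hu V x m a) /\ (forall a, A a -> Hu V x m a <= V x m).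
Hypothesis V_value_iteration : forall x m,
  (fun n => iter n Tu (fun _ _ => 0) x m) @ \oo --> V x m.

Lemma V_nondecreasing m x : V x m <= V x.+1 m.
Proof.
have [Vx_lim Vx1_lim] := (V_value_iteration x m, V_value_iteration x.+1 m).
rewrite -(cvg_lim (@Rhausdorff R) Vx_lim) -(cvg_lim (@Rhausdorff R) Vx1_lim).
apply: ler_lim; [exact: cvgP Vx_lim | exact: cvgP Vx1_lim |].
by apply: nearW => n; exact: iter_Top_nondecreasing.
Qed.

Lemma V_increasing m x : V x m < V x.+1 m.
Proof.
have [[a Aa ->] _] := V_Bellman x m.
apply: lt_le_trans (H_lt_H_succ _ x _ _ (V_nondecreasing m) Aa) _.
by have [_ ->] := V_Bellman x.+1 m.
Qed.

Lemma V_argmax_exists x m : exists a, is_argmax A (Hu V x m) a.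
Proof.
have [[a Aa Va] V_ub] := V_Bellman x m.
by exists a; split => // b Ab; rewrite -Va; exact: V_ub.
Qed.

End ValueFunction.
End Bellman.

Theorem mainTheorem7 (R : realType) (M : topologicalType)
  (alo delta beta : R) (u : nat -> M -> R) (c : R -> R) (V : nat -> M -> R) :
  0 < alo -> alo < 1 -> 0 < delta -> delta < 1 -> 0 < beta -> beta < 1 ->
  {within Aset alo, continuous c} ->
  (forall a b, Aset alo a -> Aset alo b -> a <= b -> c a <= c b) ->
  convex_on (Aset alo) c ->
  (forall m, discretely_convex (fun x => u x m)) ->
  (forall m x, u x m < u x.+1 m) ->
  (forall x, continuous (u x)) ->
  (forall x m,
     (exists2 a, Aset alo a & V x m = H delta beta u c V x m a) /\
     (forall a, Aset alo a -> H delta beta u c V x m a <= V x m)) ->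
  (forall x m,
     (fun n => iter n (Top alo delta beta u c) (fun _ _ => 0) x m) @ \oo
       --> V x m) ->
  (forall x m, strictly_concave_on (Aset alo) (H delta beta u c V x m)) /\
  (forall x m, exists! a, is_argmax (Aset alo) (H delta beta u c V x m) a) /\
  (exists! g : nat -> M -> R,
     forall x m, is_argmax (Aset alo) (H delta beta u c V x m) (g x m)).
Proof.
move=> alo_gt0 alo_lt1 delta_gt0 delta_lt1 beta_gt0 _ _ c_nd c_convex _ u_inc _
  V_Bellman V_value_iteration.
have H_sc x m : strictly_concave_on (Aset alo) (H delta beta u c V x m).
  apply: H_strictly_concave => // y.
  exact: (V_increasing alo_gt0 alo_lt1 delta_gt0 delta_lt1 beta_gt0 c_nd u_inc
    V_Bellman V_value_iteration m y).
have argmax_uniq x m : exists! a, is_argmax (Aset alo) (H delta beta u c V x m) a.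
  have [a a_max] := V_argmax_exists V_Bellman x m.
  exists a; split=> // b b_max.
  exact: (strictly_concave_on_argmax_unique _ _ _ _ Aset_convex (H_sc x m) a_max b_max).
by split=> //; split=> //; exact: unique_choice2 argmax_uniq.
Qed.
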